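(* Let $r_I>r_0>0$, $v_1,v_2>0$, $w_V>0$ and $w_I$ be real numbers with $0<w_I\le \frac{r_0 w_V v_2}{r_I(v_1+v_2)}$. Let $n\ge 1$ be an integer and $l_1,\dots,l_{n-1}\ge 0$ be real numbers. Consider the optimization problem (P) described in the context. Then the optimal value of (P) is $$\left(\sum_{i=1}^{n}Y_i\right)^*=\frac{\sum_{i=1}^{n-1}\min\{l_i,2r_I\}+2r_I}{v_2}\,w_I .$$ Moreover, this optimal value is attained by the feasible point $$Y_i^*=D_i^*=\frac{\min\{l_i,2r_I\}}{v_2}w_I\ (i=1,\dots,n-1),\qquad Y_n^*=D_n^*=\frac{2r_I}{v_2}w_I .$$
   Context: Model: a vehicle of interest (VoI) moving at speed $v_1$ receives data from $n$ ''helper'' vehicles moving in the opposite direction at speed $v_2$; consecutive helpers are at distances $l_1,\dots,l_{n-1}$; helpers download from an infrastructure point of radio range $r_I$ at rate $w_I$, and deliver to the VoI over vehicle links of range $r_0$ at rate $w_V$. $D_i$ is the amount of data helper $i$ receives from the infrastructure and $Y_i$ the amount it delivers to the VoI. The optimization problem (P), over real variables $D_1,\dots,D_n,Y_1,\dots,Y_n$, is: maximize $\sum_{i=1}^n Y_i$ subject to (i) $0\le D_i\le \frac{2r_I}{v_2}w_I$ for $i=1,\dots,n$; (ii) $\sum_{i=k_1}^{k_2}D_i\le \frac{\sum_{i=k_1}^{k_2-1}\min\{l_i,2r_I\}+2r_I}{v_2}w_I$ for all $1\le k_1\le k_2\le n$; (iii) $0\le Y_i\le \frac{2r_0}{v_1+v_2}w_V$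 for $i=1,\dots,n$; (iv) $Y_i\le D_i$ for $i=1,\dots,n$; (v) $\sum_{i=k_1}^{k_2}Y_i\le \frac{\sum_{i=k_1}^{k_2-1}\min\{l_i,2r_0\}+2r_0}{v_1+v_2}w_V$ for all $1\le k_1\le k_2\le n$. (Empty sums are zero.) *)

From mathcomp Require Import all_boot all_order all_algebra.
Set Implicit Arguments. Unset Strict Implicit. Unset Printing Implicit Defensive.
Import Order.TTheory GRing.Theory Num.Theory.
Local Open Scope ring_scope.

(* Helpers are indexed 1..n (1-based, as in the paper); D, Y : nat -> R,
   and the gaps l are indexed 1..n-1.  Values outside these ranges are irrelevant. *)

Definition window_cap (R : realFieldType) (l : nat -> R) (r v w : R) (k1 k2 : nat) : R :=
  (\sum_(k1 <= i < k2) Num.min (l i) (2 * r) + 2 * r) / v * w.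

Definition feasibleP (R : realFieldType) (n : nat) (l : nat -> R)
    (rI r0 v1 v2 wI wV : R) (D Y : nat -> R) : Prop :=
  [/\ (forall i, (1 <= i <= n)%N -> 0 <= D i <= 2 * rI / v2 * wI),
      (forall k1 k2, (1 <= k1)%N -> (k1 <= k2)%N -> (k2 <= n)%N ->
          \sum_(k1 <= i < k2.+1) D i <= window_cap l rI v2 wI k1 k2),
      (forall i, (1 <= i <= n)%N -> 0 <= Y i <= 2 * r0 / (v1 + v2) * wV),
      (forall i, (1 <= i <= n)%N -> Y i <= D i) &
      (forall k1 k2, (1 <= k1)%N -> (k1 <= k2)%N -> (k2 <= n)%N ->
          \sum_(k1 <= i < k2.+1) Y i <= window_cap l r0 (v1 + v2) wV k1 k2)].

Definition objP (R : realFieldType) (n : nat) (Y : nat -> R) : R :=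
  \sum_(1 <= i < n.+1) Y i.

Definition Ystar (R : realFieldType) (n : nat) (l : nat -> R) (rI v2 wI : R) (i : nat) : R :=
  if (i < n)%N then Num.min (l i) (2 * rI) / v2 * wI else 2 * rI / v2 * wI.

From mathcomp Require Import all_boot all_order all_algebra.
From mathcomp Require Import ring.
Set Implicit Arguments.
Unset Strict Implicit.
Unset Printing Implicit Defensive.
Import Order.TTheory GRing.Theory Num.Theory.
Local Open Scope ring_scope.

(* Constraints (iv) and (ii) over the whole convoy give
   sum Y <= sum D <= cap(1, n), so the claimed value is an upper bound.  The
   candidate saturates this window.  It is feasible because the condition on
   w_I says that a full infrastructure download 2 r_I w_I / v_2 fits into one
   vehicle contact 2 r_0 w_V / (v_1 + v_2); in particular w_I / v_2 is at most
   w_V / (v_1 + v_2), so every gap term of the infrastructure windows,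
   min(l_i, 2 r_I) w_I / v_2, is dominated by the corresponding gap term
   min(l_i, 2 r_0) w_V / (v_1 + v_2) of the vehicle windows. *)

Lemma window_capE (R : realFieldType) (l : nat -> R) (r v w : R) (k1 k2 : nat) :
  window_cap l r v w k1 k2 =
  \sum_(k1 <= i < k2) Num.min (l i) (2 * r) / v * w + 2 * r / v * w.
Proof. by rewrite /window_cap !mulrDl !big_distrl. Qed.

Lemma windows_le_cap (R : realFieldType) (n : nat) (l Y : nat -> R) (r v w : R) :
  (forall i, (1 <= i < n)%N -> Y i <= Num.min (l i) (2 * r) / v * w) ->
  (forall i, (1 <= i <= n)%N -> Y i <= 2 * r / v * w) ->
  forall k1 k2, (1 <= k1)%N -> (k1 <= k2)%N -> (k2 <= n)%N ->
  \sum_(k1 <= i < k2.+1) Y i <= window_cap l r v w k1 k2.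
Proof.
move=> le_gap le_last k1 k2 k1_ge1 le_k12 k2_le.
rewrite window_capE big_nat_recr //= lerD //.
  apply: ler_sum_nat => i /andP[k1_le lt_ik2]; apply: le_gap.
  by rewrite (leq_trans k1_ge1 k1_le) (leq_trans lt_ik2 k2_le).
by apply: le_last; rewrite (leq_trans k1_ge1 le_k12) k2_le.
Qed.

Lemma minr_scale_le (R : realDomainType) (x s t c a : R) :
  0 <= x -> 0 <= c -> c <= a -> s * c <= t * a ->
  Num.min x s * c <= Num.min x t * a.
Proof.
move=> x_ge0 c_ge0 le_ca le_sc.
have min_le_x : Num.min x s <= x by rewrite ge_min lexx.
have min_le_s : Num.min x s <= s by rewrite ge_min lexx orbT.
case: (leP x t) => _.
- by apply: le_trans (ler_wpM2l x_ge0 le_ca); apply: ler_wpM2r.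
- by apply: le_trans le_sc; apply: ler_wpM2r.
Qed.

Lemma infra_rate_le_vehicle_rate (R : realFieldType) (rI r0 v1 v2 wV wI : R) :
  0 < r0 -> r0 < rI -> 0 < v1 -> 0 < v2 ->
  wI <= r0 * wV * v2 / (rI * (v1 + v2)) ->
  rI * (v2^-1 * wI) <= r0 * ((v1 + v2)^-1 * wV).
Proof.
move=> r0_gt0 lt_r0I v1_gt0 v2_gt0 wI_le.
have rI_gt0 : 0 < rI by apply: lt_trans lt_r0I.
have v12_gt0 : 0 < v1 + v2 by rewrite addr_gt0.
have -> : r0 * ((v1 + v2)^-1 * wV) =
          rI * (v2^-1 * (r0 * wV * v2 / (rI * (v1 + v2)))).
  by field; rewrite !gt_eqF.
by rewrite ler_pM2l // ler_pM2l ?invr_gt0.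
Qed.

Lemma objP_le_window_cap (R : realFieldType) (n : nat) (l : nat -> R)
    (rI r0 v1 v2 wI wV : R) (D Y : nat -> R) :
  (1 <= n)%N -> feasibleP n l rI r0 v1 v2 wI wV D Y ->
  objP n Y <= window_cap l rI v2 wI 1 n.
Proof.
move=> n_ge1 [_ window_D _ le_YD _].
apply: le_trans (window_D 1%N n _ n_ge1 _) => //.
by apply: ler_sum_nat => i /andP[i_ge1 i_le]; apply: le_YD; rewrite i_ge1.
Qed.

Section Candidate.

Variables (R : realFieldType) (rI r0 v1 v2 wV wI : R) (n : nat) (l : nat -> R).
Hypotheses (r0_gt0 : 0 < r0) (lt_r0I : r0 < rI) (v2_gt0 : 0 < v2)
  (wI_ge0 : 0 <= wI) (l_ge0 : forall i, (1 <= i < n)%N -> 0 <= l i)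
  (rates_le : rI * (v2^-1 * wI) <= r0 * ((v1 + v2)^-1 * wV)).

Local Notation Y := (Ystar n l rI v2 wI).

Let cI_ge0 : 0 <= v2^-1 * wI.
Proof. by rewrite mulr_ge0 // invr_ge0 ltW. Qed.

Let cI_le_cV : v2^-1 * wI <= (v1 + v2)^-1 * wV.
Proof.
rewrite -(ler_pM2l r0_gt0); apply: le_trans rates_le.
exact: ler_wpM2r (ltW lt_r0I).
Qed.

Lemma Ystar_gap i : (i < n)%N -> Y i = Num.min (l i) (2 * rI) / v2 * wI.
Proof. by rewrite /Ystar => ->. Qed.

Lemma Ystar_bounds i : (1 <= i <= n)%N -> 0 <= Y i <= 2 * rI / v2 * wI.
Proof.
move=> /andP[i_ge1 _]; rewrite /Ystar -!(mulrA _ v2^-1).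
have rI_ge0 : 0 <= 2 * rI by rewrite mulr_ge0 // ltW // (lt_trans r0_gt0).
case: ifP => [lt_in | _]; last by rewrite lexx andbT mulr_ge0.
have l_i_ge0 : 0 <= l i by apply: l_ge0; rewrite i_ge1.
by rewrite mulr_ge0 ?le_min ?l_i_ge0 // ler_wpM2r ?ge_min ?lexx ?orbT.
Qed.

Lemma le_download_le_contact (x : R) :
  x <= 2 * rI / v2 * wI -> x <= 2 * r0 / (v1 + v2) * wV.
Proof. move=> /le_trans; apply; rewrite -!mulrA ler_pM2l //. Qed.

Lemma Ystar_feasible : feasibleP n l rI r0 v1 v2 wI wV Y Y.
Proof.
split=> //.
- by move=> i /Ystar_bounds.
- apply: windows_le_cap => [i /andP[_ lt_in] | i /Ystar_bounds /andP[] //].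
  by rewrite Ystar_gap.
- by move=> i /Ystar_bounds /andP[-> /le_download_le_contact].
- apply: windows_le_cap => [i /andP[i_ge1 lt_in] | i /Ystar_bounds /andP[_]].
    rewrite Ystar_gap // -!mulrA minr_scale_le ?l_ge0 ?i_ge1 //.
    by rewrite -!mulrA ler_pM2l.
  exact: le_download_le_contact.
Qed.

End Candidate.

Lemma objP_Ystar (R : realFieldType) (n : nat) (l : nat -> R) (rI v2 wI : R) :
  (1 <= n)%N -> objP n (Ystar n l rI v2 wI) = window_cap l rI v2 wI 1 n.
Proof.
move=> n_ge1; rewrite /objP window_capE big_nat_recr //= {2}/Ystar ltnn.
by congr (_ + _); apply: eq_big_nat => i /andP[_ lt_in]; rewrite /Ystar lt_in.
Qed.

Theorem theorem1 (R : realFieldType) (rI r0 v1 v2 wV wI : R) (n : nat) (l : nat -> R) :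
  0 < r0 -> r0 < rI -> 0 < v1 -> 0 < v2 -> 0 < wV ->
  0 < wI -> wI <= r0 * wV * v2 / (rI * (v1 + v2)) ->
  (1 <= n)%N ->
  (forall i, (1 <= i <= n.-1)%N -> 0 <= l i) ->
  let V := (\sum_(1 <= i < n) Num.min (l i) (2 * rI) + 2 * rI) / v2 * wI in
  feasibleP n l rI r0 v1 v2 wI wV (Ystar n l rI v2 wI) (Ystar n l rI v2 wI) /\
  objP n (Ystar n l rI v2 wI) = V /\
  (forall D Y : nat -> R, feasibleP n l rI r0 v1 v2 wI wV D Y -> objP n Y <= V).
Proof.
move=> r0_gt0 lt_r0I v1_gt0 v2_gt0 _ wI_gt0 wI_le n_ge1 l_ge0 V.
have rates_le := infra_rate_le_vehicle_rate r0_gt0 lt_r0I v1_gt0 v2_gt0 wI_le.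
have l_gap_ge0 i : (1 <= i < n)%N -> 0 <= l i.
  by case/andP=> i_ge1 lt_in; apply: l_ge0; rewrite i_ge1 -ltnS prednK.
split; last split.
- exact: Ystar_feasible (ltW wI_gt0) l_gap_ge0 rates_le.
- exact: objP_Ystar.
- by move=> D Y; apply: objP_le_window_cap.
Qed.
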